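(* Let $G$ be a connected graph and let $A\subseteq V(G)$ be such that the distance in $G$ between any two distinct members of $A$ is at least $3$. Then $\tilde{H}_k(\operatorname{ind}(G);\mathbf{k})=0$ for all $k\le|A|-2$.
   Context: All graphs are finite and simple; $\mathbf{k}$ is a fixed field. Distance is the graph (shortest-path) distance. $\operatorname{ind}(G)$ is the simplicial complex on $V(G)$ whose faces are the independent sets of $G$, and $\tilde H_k$ is reduced simplicial homology with coefficients in $\mathbf{k}$. *)

From HB Require Import structures.
From mathcomp Require Import all_boot all_order all_algebra.
Set Implicit Arguments. Unset Strict Implicit. Unset Printing Implicit Defensive.
Import GRing.Theory.
Local Open Scope ring_scope.

Definition simple_graph (T : finType) (e : rel T) : Prop :=
  symmetric e /\ irreflexive e.

Definition connected_graph (T : finType) (e : rel T) : Prop :=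
  forall x y : T, connect e x y.

Definition dist_le (T : finType) (e : rel T) (a b : T) (n : nat) : Prop :=
  exists p : seq T, [/\ (size p <= n)%N, path e a p & last a p = b].

(* Independent sets of G = faces of ind(G). *)
Definition independent (T : finType) (e : rel T) (S : {set T}) : bool :=
  [forall x in S, forall y in S, ~~ e x y].

(* Simplicial chains of ind(G) with coefficients in K, represented as
   coefficient functions on finite vertex sets.  A chain of "size n"
   (i.e. of dimension n-1) is supported on faces with n vertices.
   Orientation: faces are ordered by the enumeration order of T. *)
Definition is_chain (K : fieldType) (T : finType) (e : rel T) (n : nat)
  (c : {set T} -> K) : Prop :=
  forall S : {set T}, (~~ independent e S) || (#|S| != n) -> c S = 0.

Definition ins_sign (K : fieldType) (T : finType) (v : T) (S : {set T}) : K :=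
  (-1) ^+ #|[set u in S | (enum_rank u < enum_rank v)%N]|.

(* simplicial boundary, in coefficient form:
   (d c)(S) = sum_{v notin S} sign(v,S) * c(S + v).
   Includes the augmentation (S = set0), so it computes reduced homology. *)
Definition boundary (K : fieldType) (T : finType) (c : {set T} -> K)
  : {set T} -> K :=
  fun S => \sum_(v | v \notin S) ins_sign K v S * c (v |: S).

(* Reduced homology of ind(G) in dimension n-1 vanishes
   (n : nat, so dimension ranges over -1, 0, 1, ...):
   every (n-1)-cycle is an (n-1)-boundary. *)
Definition red_hom_vanishes (K : fieldType) (T : finType) (e : rel T)
  (n : nat) : Prop :=
  forall c : {set T} -> K, is_chain e n c -> (forall S, boundary c S = 0) ->
  exists b : {set T} -> K, is_chain e n.+1 b /\ forall S, boundary b S = c S.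

From mathcomp Require Import all_boot all_order all_algebra.
From mathcomp Require Import ring zify.
Set Implicit Arguments. Unset Strict Implicit. Unset Printing Implicit Defensive.
Import GRing.Theory.
Local Open Scope ring_scope.

(* For a vertex v of W, ind(G[W]) is the union of the deletion ind(G[W - v])
   and the cone from v over the link ind(G[W - N[v]]); at the chain level every
   chain splits as (deletion) + (cone over its link), so H~_k of ind(G[W])
   vanishes once H~_k(ind(G[W - v])) and H~_(k-1)(ind(G[W - N[v]])) do.
   Induct on |W \ A| for A included in W, removing a vertex v outside A:
   W - v still contains A, and since the distance-3 condition lets N[v] meet A
   in at most one vertex, W - N[v] still contains |A| - 1 vertices of A.
   When W = A the graph G[W] has no edges and ind(G[W]) is a simplex, a cone. *)

Section Chains.
Variables (K : fieldType) (T : finType).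
Implicit Types (u v : T) (R S : {set T}) (c f : {set T} -> K).

Lemma ins_sign_sqr v S : ins_sign K v S * ins_sign K v S = 1.
Proof. by rewrite /ins_sign -exprD addnn -mul2n exprM sqrrN !expr1n. Qed.

Lemma ins_sign_neq0 v S : ins_sign K v S != 0.
Proof. by rewrite /ins_sign expf_eq0 oppr_eq0 oner_eq0 andbF. Qed.

Lemma card_filter_setU1 (P : pred T) u S : u \notin S ->
  #|[set x in u |: S | P x]| = (P u + #|[set x in S | P x]|)%N.
Proof.
move=> uS; case Pu: (P u).
  have -> : [set x in u |: S | P x] = u |: [set x in S | P x].
    by apply/setP => x; rewrite !inE; case: (eqVneq x u) => [->|]; rewrite ?Pu.
  by rewrite cardsU1 inE (negbTE uS).
suff -> : [set x in u |: S | P x] = [set x in S | P x] by [].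
apply/setP => x; rewrite !inE.
by case: (eqVneq x u) => [->|]; rewrite ?Pu ?(negbTE uS).
Qed.

Lemma ins_sign_swap u v S : u != v -> u \notin S -> v \notin S ->
  ins_sign K u (v |: S) * ins_sign K v (u |: S)
  = - (ins_sign K u S * ins_sign K v S).
Proof.
move=> uv uS vS; rewrite /ins_sign.
rewrite (card_filter_setU1 (fun x => enum_rank x < enum_rank u)%N vS).
rewrite (card_filter_setU1 (fun x => enum_rank x < enum_rank v)%N uS) !exprD.
have ruv : enum_rank u != enum_rank v by apply: contra uv => /eqP/enum_rank_inj->.
case: (ltngtP (enum_rank u) (enum_rank v)) => [_|_|ruv_eq].
- by rewrite expr0 expr1; ring.
- by rewrite expr0 expr1; ring.
- by move: ruv; rewrite -(inj_eq val_inj) /= ruv_eq eqxx.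
Qed.

Definition cone v f S : K := if v \in S then ins_sign K v (S :\ v) * f (S :\ v) else 0.
Definition deletion v c S : K := if v \in S then 0 else c S.
Definition link v c S : K := if v \in S then 0 else ins_sign K v S * c (v |: S).

Lemma eq_boundary c1 c2 S : c1 =1 c2 -> boundary c1 S = boundary c2 S.
Proof. by move=> eq_c; apply: eq_bigr => u _; rewrite eq_c. Qed.

Lemma boundaryD c1 c2 S :
  boundary (fun R => c1 R + c2 R) S = boundary c1 S + boundary c2 S.
Proof. by rewrite /boundary -big_split; apply: eq_bigr => u _; rewrite mulrDr. Qed.

Lemma boundaryB c1 c2 S :
  boundary (fun R => c1 R - c2 R) S = boundary c1 S - boundary c2 S.
Proof.
by rewrite /boundary -sumrN -big_split; apply: eq_bigr => u _; rewrite mulrBr.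
Qed.

Lemma boundary0 S : boundary (fun _ => 0 : K) S = 0.
Proof. by apply: big1 => u _; rewrite mulr0. Qed.

Lemma chain_decomp v c S : c S = deletion v c S + cone v (link v c) S.
Proof.
rewrite /deletion /cone /link; case: ifP => vS; last by rewrite addr0.
by rewrite add0r setD11 setD1K // mulrA ins_sign_sqr mul1r.
Qed.

Lemma boundary_cone v f S : (forall R, v \in R -> f R = 0) ->
  boundary (cone v f) S = f S - cone v (boundary f) S.
Proof.
move=> fv; rewrite /boundary /cone; case: ifP => vS; last first.
  rewrite (bigD1 v) /=; last by rewrite vS.
  rewrite setU11 setU1K ?vS // mulrA ins_sign_sqr mul1r subr0 big1 ?addr0 //.
  by move=> u /andP[uS uv]; rewrite in_setU1 eq_sym (negbTE uv) vS mulr0.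
rewrite (fv _ vS) sub0r [X in _ = - (_ * X)](bigD1 v) /=; last by rewrite setD11.
rewrite setD1K // (fv _ vS) mulr0 add0r.
have -> : \sum_(u | (u \notin S :\ v) && (u != v))
            ins_sign K u (S :\ v) * f (u |: S :\ v)
        = \sum_(u | u \notin S) ins_sign K u (S :\ v) * f (u |: S :\ v).
  apply: eq_bigl => u; rewrite !inE.
  by case: (eqVneq u v) => [->|]; rewrite ?vS ?andbF ?andbT.
rewrite mulr_sumr -sumrN; apply: eq_bigr => u uS.
have uv : u != v by apply: contraNneq uS => ->.
have -> : (u |: S) :\ v = u |: (S :\ v).
  apply/setP => x; rewrite !inE.
  by case: (eqVneq x v) => [->|] /=; first by rewrite eq_sym (negbTE uv).
have uSv : u \notin S :\ v by rewrite !inE negb_and uS orbT.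
have vSv : v \notin S :\ v by rewrite !inE eqxx.
rewrite setU1r // -[in ins_sign K u S](setD1K vS) mulrA ins_sign_swap //; ring.
Qed.

Lemma boundary_decomp v c S :
  boundary c S = boundary (deletion v c) S + link v c S - cone v (boundary (link v c)) S.
Proof.
rewrite (eq_boundary S (chain_decomp v c)) boundaryD boundary_cone ?addrA //.
by move=> R vR; rewrite /link vR.
Qed.

Lemma boundary_decomp_notin v c S : v \notin S ->
  boundary c S = boundary (deletion v c) S + link v c S.
Proof. by move=> vS; rewrite (boundary_decomp v) /cone (negbTE vS) subr0. Qed.

Lemma boundary_deletion_mem v c S : v \in S -> boundary (deletion v c) S = 0.
Proof. by move=> vS; apply: big1 => u _; rewrite /deletion in_setU1 vS orbT mulr0. Qed.

Lemma link_cycle v c :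
  (forall S, boundary c S = 0) -> forall S, boundary (link v c) S = 0.
Proof.
move=> c_cycle S; case vS: (v \in S).
  by apply: big1 => u _; rewrite /link in_setU1 vS orbT mulr0.
move: (c_cycle (v |: S)).
rewrite (boundary_decomp v) boundary_deletion_mem ?setU11 // add0r.
rewrite /link /cone setU11 setU1K ?vS // sub0r => /eqP; rewrite oppr_eq0 mulf_eq0.
by rewrite (negbTE (ins_sign_neq0 _ _)) => /eqP.
Qed.

End Chains.

Section IndependenceComplex.
Variables (K : fieldType) (T : finType) (e : rel T).
Hypotheses (e_sym : symmetric e) (e_irr : irreflexive e).
Implicit Types (u v : T) (A B R S W : {set T}) (c f : {set T} -> K).

Definition chain_on W n c : Prop :=
  forall S, ~~ [&& S \subset W, independent e S & #|S| == n] -> c S = 0.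

Definition hom_vanishes_on W n : Prop :=
  forall c, chain_on W n c -> (forall S, boundary c S = 0) ->
  exists b, chain_on W n.+1 b /\ forall S, boundary b S = c S.

Definition cnbhd v : {set T} := v |: [set u | e v u].

Definition far_apart A : Prop :=
  forall a b u, a \in A -> b \in A -> a != b -> ~~ e a b && ~~ (e a u && e u b).

Lemma independentP S :
  reflect (forall x y, x \in S -> y \in S -> ~~ e x y) (independent e S).
Proof.
apply: (iffP forall_inP) => h; last by move=> x xS; apply/forall_inP => y yS; apply: h.
by move=> x y xS; move/forall_inP: (h x xS); apply.
Qed.

Lemma independentS S R : S \subset R -> independent e R -> independent e S.
Proof.
move=> sSR /independentP indR; apply/independentP => x y /(subsetP sSR) xR.
by move/(subsetP sSR); apply: indR.
Qed.

Lemma chain_onP W n c : chain_on W n c <->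
  (forall S, c S != 0 -> [/\ S \subset W, independent e S & #|S| = n]).
Proof.
split=> hc S.
  case h: [&& S \subset W, independent e S & #|S| == n].
    by case/and3P: h => ? ? /eqP.
  by rewrite hc ?h ?eqxx.
by move=> hS; apply/eqP; apply: contraR hS => /hc [-> -> ->]; rewrite eqxx.
Qed.

Lemma chain_on_setT n c : chain_on [set: T] n c <-> is_chain e n c.
Proof. by split=> hc S hS; apply: hc; move: hS; rewrite subsetT /= negb_and. Qed.

Lemma chain_onS W W' n c : W \subset W' -> chain_on W n c -> chain_on W' n c.
Proof.
move=> sWW' /chain_onP hc; apply/chain_onP => S /hc [sSW ? ?].
by split=> //; apply: subset_trans sWW'.
Qed.

Lemma chain_onD W n c1 c2 :
  chain_on W n c1 -> chain_on W n c2 -> chain_on W n (fun S => c1 S + c2 S).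
Proof. by move=> h1 h2 S hS; rewrite h1 // h2 // addr0. Qed.

Lemma chain_onB W n c1 c2 :
  chain_on W n c1 -> chain_on W n c2 -> chain_on W n (fun S => c1 S - c2 S).
Proof. by move=> h1 h2 S hS; rewrite h1 // h2 // subr0. Qed.

Lemma chain_on_deletion W n v c : chain_on W n c -> chain_on (W :\ v) n (deletion v c).
Proof.
move/chain_onP=> hc; apply/chain_onP => S; rewrite /deletion.
case: ifP => vS; first by rewrite eqxx.
move=> /hc [sSW indS cardS]; split=> //; apply/subsetP => x xS.
by rewrite !inE (subsetP sSW) // andbT; apply: contraFneq vS => <-.
Qed.

Lemma chain_on_link W n v c :
  chain_on W n c -> chain_on (W :\: cnbhd v) n.-1 (link v c).
Proof.
move/chain_onP=> hc; apply/chain_onP => S; rewrite /link.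
case: ifP => vS; first by rewrite eqxx.
rewrite mulf_eq0 negb_or => /andP[_ /hc [sW indS cardS]]; split.
- apply/subsetP => x xS; rewrite !inE (subsetP sW) ?in_setU1 ?xS ?orbT // andbT.
  rewrite negb_or; apply/andP; split; first by apply: contraFneq vS => <-.
  by move/independentP: indS; apply; rewrite !inE ?eqxx ?xS ?orbT.
- by apply: independentS indS; apply/subsetP => x xS; rewrite in_setU1 xS orbT.
- by move: cardS; rewrite cardsU1 vS /= add1n => <-.
Qed.

Lemma chain_on_cone W W' n v f :
  W' \subset W -> v \in W -> v \notin W' -> (forall x, x \in W' -> ~~ e v x) ->
  chain_on W' n f -> chain_on W n.+1 (cone v f).
Proof.
move=> sW'W vW vW' v_nadj /chain_onP hf; apply/chain_onP => S; rewrite /cone.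
case: ifP => vS; last by rewrite eqxx.
rewrite mulf_eq0 negb_or => /andP[_ /hf [sW' indS cardS]].
have inW' x : x \in S -> x != v -> x \in W'.
  by move=> xS xv; apply: (subsetP sW'); rewrite !inE xv xS.
split.
- apply/subsetP => x xS; case: (eqVneq x v) => [->//|xv].
  by apply: (subsetP sW'W); apply: inW'.
- apply/independentP => x y xS yS.
  case: (eqVneq x v) => [->|xv]; case: (eqVneq y v) => [->|yv].
  + by rewrite e_irr.
  + exact/v_nadj/inW'.
  + by rewrite e_sym; apply/v_nadj/inW'.
  + by move/independentP: indS; apply; rewrite !inE ?xv ?yv.
- by rewrite (cardsD1 v S) vS cardS.
Qed.

Lemma hom_vanishes_on_cone_point W n a :
  a \in W -> (forall x, x \in W -> ~~ e a x) -> hom_vanishes_on W n.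
Proof.
move=> aW a_nadj c hc c_cycle.
exists (cone a (deletion a c)); split.
  apply: (@chain_on_cone W (W :\ a)); rewrite ?subD1set ?setD11 //.
    by move=> x /setD1P[_]; apply: a_nadj.
  exact: chain_on_deletion.
move=> S; rewrite boundary_cone; last by move=> R aR; rewrite /deletion aR.
suff -> : cone a (boundary (deletion a c)) S = - cone a (link a c) S.
  by rewrite opprK -chain_decomp.
rewrite /cone; case: ifP => aS; last by rewrite oppr0.
have aSa : a \notin S :\ a by rewrite setD11.
move: (boundary_decomp_notin c aSa); rewrite c_cycle => /eqP.
by rewrite eq_sym addr_eq0 => /eqP ->; rewrite mulrN.
Qed.

(* The chain-level Mayer-Vietoris step: [c] is homologous to
   [deletion v c + f] with [boundary f = link v c], and the correction term is
   the cone from [v] over [f]. *)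
Lemma hom_vanishes_on_split W n v : v \in W ->
  hom_vanishes_on (W :\ v) n ->
  (0 < n -> hom_vanishes_on (W :\: cnbhd v) n.-1)%N ->
  hom_vanishes_on W n.
Proof.
move=> vW del_van link_van c hc c_cycle.
have vN : v \in cnbhd v by rewrite setU11.
have [f [hf f_bd]] : exists f,
    chain_on (W :\: cnbhd v) n f /\ forall S, boundary f S = link v c S.
  case: n hc c_cycle del_van link_van => [|m] hc c_cycle _ link_van.
    exists (fun _ => 0); split=> // S; rewrite boundary0 /link; case: ifP => // vS.
    by rewrite hc ?mulr0 // cardsU1 vS /= add1n; apply/negP => /and3P[].
  by apply: link_van; [|exact: chain_on_link|exact: link_cycle].
have fv R : v \in R -> f R = 0.
  move=> vR; apply: hf; apply/negP => /and3P[sRW _ _].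
  by move: (subsetP sRW v vR); rewrite inE vN.
have [g [hg g_bd]] : exists g, chain_on (W :\ v) n.+1 g /\
    forall S, boundary g S = deletion v c S + f S.
  apply: del_van.
    apply: chain_onD; first exact: chain_on_deletion.
    apply: chain_onS hf; apply/subsetP => x /setDP[xW xN].
    by rewrite !inE xW andbT; apply: contraNneq xN => ->.
  move=> S; rewrite boundaryD f_bd; case vS: (v \in S).
    by rewrite boundary_deletion_mem // /link vS addr0.
  by rewrite -boundary_decomp_notin ?vS.
exists (fun S => g S - cone v f S); split.
  apply: chain_onB; first by apply: chain_onS hg; apply: subD1set.
  apply: (@chain_on_cone W (W :\: cnbhd v)) => //; first exact: subsetDl.
    by rewrite inE vN.
  by move=> x /setDP[_]; rewrite in_setU1 negb_or inE => /andP[].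
move=> S; rewrite boundaryB g_bd boundary_cone //.
rewrite [RHS](chain_decomp v) /cone.
by case: ifP => _; rewrite ?f_bd; ring.
Qed.

Lemma far_apartS A B : B \subset A -> far_apart A -> far_apart B.
Proof. by move=> sBA farA a b u /(subsetP sBA) aA /(subsetP sBA); apply: farA. Qed.

Lemma far_apart_independent A : far_apart A -> independent e A.
Proof.
move=> farA; apply/independentP => x y xA yA.
case: (eqVneq x y) => [->|xy]; first by rewrite e_irr.
by case/andP: (farA x y x xA yA xy).
Qed.

Lemma card_far_apart_cnbhd A v : far_apart A -> (#|A :&: cnbhd v| <= 1)%N.
Proof.
move=> farA; apply/card_le1_eqP => x y /setIP[xA xN] /setIP[yA yN].
case: (eqVneq x y) => // xy.
have /andP[nxy nxvy] := farA x y v xA yA xy.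
move: xN yN; rewrite !in_setU1 !inE.
case: (eqVneq x v) => [exv|xv] /=; case: (eqVneq y v) => [eyv|yv] /=.
- by rewrite exv eyv eqxx in xy.
- by move=> _ evy; rewrite exv evy in nxy.
- by move=> evx _; rewrite eyv e_sym evx in nxy.
- by move=> evx evy; rewrite e_sym evx evy in nxvy.
Qed.

Lemma hom_vanishes_on_far_apart W A n :
  A \subset W -> far_apart A -> (n < #|A|)%N -> hom_vanishes_on W n.
Proof.
have [k] := ubnP #|W :\: A|.
elim: k W A n => // k IHk W A n ltWAk sAW farA ltnA.
have [WA0 | [v /setDP[vW vA]]] := set_0Vmem (W :\: A).
  have /card_gt0P [a aA] : (0 < #|A|)%N by apply: leq_ltn_trans ltnA.
  apply: (@hom_vanishes_on_cone_point _ _ a); first exact: (subsetP sAW).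
  move=> x xW; move/independentP: (far_apart_independent farA); apply=> //.
  apply: contraT => xA; have : x \in W :\: A by rewrite inE xA xW.
  by rewrite WA0 inE.
have vN : v \in cnbhd v by rewrite setU11.
have ltWAv_k (Y : {set T}) : Y \subset (W :\: A) :\ v -> (#|Y| < k)%N.
  move=> sY; apply: leq_ltn_trans (subset_leq_card sY) _.
  by move: ltWAk; rewrite (cardsD1 v) inE vA vW.
apply: (hom_vanishes_on_split vW) => [|n_gt0].
  apply: (IHk _ A) => //.
    by apply: ltWAv_k; apply/subsetP => x; rewrite !inE andbCA.
  apply/subsetP => x xA; rewrite !inE (subsetP sAW) // andbT.
  by apply: contraNneq vA => <-.
apply: (IHk _ (A :\: cnbhd v)).
- apply: ltWAv_k; apply/subsetP => x; rewrite !inE => /andP[xAN /andP[xN xW]].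
  rewrite xW (negbTE xN) /= in xAN *; rewrite xAN !andbT.
  by case/norP: xN.
- exact: setSD.
- by apply: far_apartS farA; apply: subsetDl.
- have := cardsID (cnbhd v) A; have := card_far_apart_cnbhd v farA.
  by move: n_gt0 ltnA; clear; lia.
Qed.

End IndependenceComplex.

Lemma far_apart_dist (T : finType) (e : rel T) (A : {set T}) :
  (forall a b, a \in A -> b \in A -> a != b -> ~ dist_le e a b 2) -> far_apart e A.
Proof.
move=> farA a b u aA bA ab; apply/andP; split; apply/negP.
  by move=> eab; apply: (farA a b aA bA ab); exists [:: b]; rewrite /= eab.
move=> /andP[eau eub]; apply: (farA a b aA bA ab).
by exists [:: u; b]; rewrite /= eau eub.
Qed.

Theorem corollary6p12 (K : fieldType) (T : finType) (e : rel T)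
  (Hsimple : simple_graph e) (Hconn : connected_graph e) (A : {set T})
  (HA : forall a b, a \in A -> b \in A -> a != b -> ~ dist_le e a b 2) :
  forall n : nat, (n.+1 <= #|A|)%N -> red_hom_vanishes K e n.
Proof.
case: Hsimple => e_sym e_irr n ltnA c c_chain c_cycle.
have c_chain_on : chain_on e [set: T] n c by apply/chain_on_setT.
have [b [b_chain b_bd]] := hom_vanishes_on_far_apart e_sym e_irr (subsetT A)
  (far_apart_dist HA) ltnA c_chain_on c_cycle.
by exists b; split=> //; apply/chain_on_setT.
Qed.
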